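(* Let $p$ be a prime, $e\geq 2$, and $G$ a finite abelian $p$-group. Let $\overline{f_e}: V(\mathbb{Z}_{p^e}G)\to V(\mathbb{Z}_{p^{e-1}}G)$ be the group homomorphism induced by the ring homomorphism $\mathbb{Z}_{p^e}G\to\mathbb{Z}_{p^{e-1}}G$, $\sum_g a_g g\mapsto \sum_g (a_g \bmod p^{e-1}) g$. Then $\ker(\overline{f_e})=1+p^{e-1}\omega(\mathbb{Z}_{p^e}G)$ is an elementary abelian $p$-group of order $p^{|G|-1}$ and \[ V(\mathbb{Z}_{p^e}G)/\big(1+p^{e-1}\omega(\mathbb{Z}_{p^e}G)\big)\cong V(\mathbb{Z}_{p^{e-1}}G). \]
   Context: $\mathbb{Z}_{p^k}$ is the ring of residues modulo $p^k$. For a commutative ring $R$, $\omega(RG)$ is the augmentation ideal of $RG$ (elements whose coefficients sum to $0$), and $V(RG)=1+\omega(RG)$ is the group of normalized units. $1+p^{e-1}\omega(\mathbb{Z}_{p^e}G)=\{1+p^{e-1}z: z\in\omega(\mathbb{Z}_{p^e}G)\}$. *)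

From HB Require Import structures.
From mathcomp Require Import all_boot all_order all_algebra all_fingroup all_solvable.
Set Implicit Arguments. Unset Strict Implicit. Unset Printing Implicit Defensive.
Import GRing.Theory.
Local Open Scope ring_scope.
Local Open Scope group_scope.

(* The group ring R gT: finitely supported (= all, gT finite) functions gT -> R,
   i.e. formal sums \sum_g a_g g, with convolution product. *)
Definition gring (R : finNzRingType) (gT : finGroupType) : predArgType :=
  {ffun gT -> R}.

Section GroupRing.
Variables (R : finNzRingType) (gT : finGroupType).

HB.instance Definition _ := Finite.on (gring R gT).
HB.instance Definition _ := GRing.Zmodule.on (gring R gT).

Definition gring_one : gring R gT := [ffun g : gT => ((g == 1%g) %:R)%R].
Definition gring_mul (a b : gring R gT) : gring R gT :=
  [ffun g : gT => (\sum_(h : gT) a h * b (h^-1 * g)%g)%R].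

Lemma gring_mulA : associative gring_mul.
Proof.
move=> a b c; apply/ffunP=> g; rewrite !ffunE.
under eq_bigr do rewrite ffunE big_distrr /=.
under [RHS]eq_bigr do rewrite ffunE big_distrl /=.
rewrite [RHS]exchange_big /=; apply: eq_bigr => h _.
rewrite [RHS](reindex_inj (mulgI h)) /=; apply: eq_bigr => k _.
by rewrite mulKg invMg mulgA mulrA.
Qed.

Lemma gring_mul1r : left_id gring_one gring_mul.
Proof.
move=> a; apply/ffunP=> g; rewrite ffunE (bigD1 1) //= big1 => [|h /negbTE h1].
  by rewrite ffunE eqxx mul1r invg1 mul1g addr0.
by rewrite ffunE h1 mul0r.
Qed.

Lemma gring_mulr1 : right_id gring_one gring_mul.
Proof.
move=> a; apply/ffunP=> g; rewrite ffunE (bigD1 g) //= big1 => [|h hg].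
  by rewrite ffunE mulVg eqxx mulr1 addr0.
by rewrite ffunE -eq_mulVg1 (negbTE hg) mulr0.
Qed.

Lemma gring_mulDl : left_distributive gring_mul +%R.
Proof.
move=> a b c; apply/ffunP=> g; rewrite !ffunE -big_split /=.
by apply: eq_bigr => h _; rewrite ffunE mulrDl.
Qed.

Lemma gring_mulDr : right_distributive gring_mul +%R.
Proof.
move=> a b c; apply/ffunP=> g; rewrite !ffunE -big_split /=.
by apply: eq_bigr => h _; rewrite ffunE mulrDr.
Qed.

Lemma gring_one_neq0 : gring_one != 0%R.
Proof.
apply/eqP => /ffunP /(_ 1); rewrite !ffunE eqxx; apply/eqP; exact: oner_neq0.
Qed.

HB.instance Definition _ := GRing.Zmodule_isNzRing.Build (gring R gT)
  gring_mulA gring_mul1r gring_mulr1 gring_mulDl gring_mulDr gring_one_neq0.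

Definition gring_unit : pred (gring R gT) :=
  fun a => [exists b : gring R gT, (b * a == 1)%R && (a * b == 1)%R].
Definition gring_inv (a : gring R gT) : gring R gT :=
  odflt a [pick b : gring R gT | (b * a == 1)%R && (a * b == 1)%R].

Lemma gring_mulVr : {in gring_unit, left_inverse 1%R gring_inv *%R}.
Proof.
move=> a /existsP ua; rewrite /gring_inv; case: pickP => [b /andP[/eqP] //|].
by move=> none; case: ua => b; rewrite none.
Qed.

Lemma gring_divrr : {in gring_unit, right_inverse 1%R gring_inv *%R}.
Proof.
move=> a /existsP ua; rewrite /gring_inv; case: pickP => [b /andP[_ /eqP] //|].
by move=> none; case: ua => b; rewrite none.
Qed.

Lemma gring_unitP (x y : gring R gT) : (y * x = 1 /\ x * y = 1)%R -> gring_unit x.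
Proof. by case=> h1 h2; apply/existsP; exists y; rewrite h1 h2 !eqxx. Qed.

Lemma gring_inv_out : {in [predC gring_unit], gring_inv =1 id}.
Proof.
move=> a; rewrite inE /= => /existsP ua; rewrite /gring_inv; case: pickP => //.
by move=> b hb; case: ua; exists b.
Qed.

HB.instance Definition _ := GRing.NzRing_hasMulInverse.Build (gring R gT)
  gring_mulVr gring_divrr gring_unitP gring_inv_out.

Definition aug (a : gring R gT) : R := (\sum_(g : gT) a g)%R.

Definition aug_ideal : {set gring R gT} := [set z | aug z == 0%R].

Definition Vunits : {set {unit gring R gT}} :=
  [set u : {unit gring R gT} | aug (val u) == 1%R].

End GroupRing.

Definition red_gring (p e : nat) (gT : finGroupType)
  (a : gring 'Z_(p ^ e) gT) : gring 'Z_(p ^ e.-1) gT :=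
  [ffun g => (((a g : 'I__) : nat)%:R : 'Z_(p ^ e.-1))%R].

Definition ker_red (p e : nat) (gT : finGroupType) : {set {unit gring 'Z_(p ^ e) gT}} :=
  [set u in Vunits 'Z_(p ^ e) gT | @red_gring p e gT (val u) == 1%R].

Definition one_plus_pomega (p e : nat) (gT : finGroupType) :
  {set {unit gring 'Z_(p ^ e) gT}} :=
  [set u : {unit gring 'Z_(p ^ e) gT} |
     [exists z in aug_ideal 'Z_(p ^ e) gT, val u == (1 + z *+ (p ^ e.-1))%R]].

From HB Require Import structures.
From mathcomp Require Import all_boot all_order all_algebra all_fingroup all_solvable.
Set Implicit Arguments. Unset Strict Implicit. Unset Printing Implicit Defensive.
Import GRing.Theory.
Local Open Scope ring_scope.

(* Write n = p^e and c = p^(e-1).  The kernel of the reduction Z_n G -> Z_c G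
   is c Z_n G, and it squares to zero because n divides c^2.  Hence every
   1 + c x is a unit and (1 + c x)(1 + c y) = 1 + c (x + y), so 1 + c omega is
   elementary abelian; x |-> 1 + c x identifies it with the additive group
   omega(Z_p G), of order p^(|G| - 1).  Units lift along a surjective ring map
   with square-zero kernel, so reduction maps V(Z_n G) onto V(Z_c G) with
   kernel 1 + c omega, and the first isomorphism theorem concludes. *)

Lemma unitr_lr (R : unitRingType) (x l r : R) :
  l * x = 1 -> x * r = 1 -> x \is a GRing.unit.
Proof.
move=> lx1 xr1; apply/unitrP; exists r; split=> //.
have -> : r = l by rewrite -[l]mulr1 -xr1 mulrA lx1 mul1r.
exact: lx1.
Qed.

Lemma unitr_1Dsqr0 (R : unitRingType) (y : R) :
  y * y = 0 -> 1 + y \is a GRing.unit.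
Proof.
move=> yy0; apply/unitrP; exists (1 - y); split.
  by rewrite mulrBl mul1r mulrDr mulr1 yy0 addr0 addrK.
by rewrite mulrDl mul1r mulrBr mulr1 yy0 subr0 subrK.
Qed.

Lemma unit_lift_sqr0 (R S : unitRingType) (f : {rmorphism R -> S}) (g : S -> R) :
  cancel g f -> (forall y, f y = 0 -> y * y = 0) ->
  forall x, f x \is a GRing.unit -> x \is a GRing.unit.
Proof.
move=> gK ker_sqr0 x fxU; set x' := g (f x)^-1.
have unit_mod (a b : R) : f a * f b = 1 -> a * b \is a GRing.unit.
  move=> fab1; rewrite -[a * b](subrK 1) addrC; apply/unitr_1Dsqr0/ker_sqr0.
  by rewrite rmorphB rmorphM fab1 rmorph1 subrr.
have xx'U : x * x' \is a GRing.unit by apply: unit_mod; rewrite gK mulrV.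
have x'xU : x' * x \is a GRing.unit by apply: unit_mod; rewrite gK mulVr.
apply: (@unitr_lr _ _ ((x' * x)^-1 * x') (x' * (x * x')^-1)).
  by rewrite -mulrA mulVr.
by rewrite mulrA mulrV.
Qed.

Section GroupRing.
Variables (R : finNzRingType) (gT : finGroupType).
Implicit Types (a b : gring R gT) (t : R).

Lemma aug_is_zmod_morphism : zmod_morphism (@aug R gT).
Proof. by move=> a b; rewrite /aug -sumrB; apply: eq_bigr => g _; rewrite !ffunE. Qed.

Lemma aug_is_monoid_morphism : monoid_morphism (@aug R gT).
Proof.
split.
  rewrite /aug (bigD1 1%g) //= big1 => [|g /negbTE g1]; last by rewrite ffunE g1.
  by rewrite ffunE eqxx addr0.
move=> a b; rewrite /aug big_distrl /=.
under eq_bigr do rewrite ffunE.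
rewrite exchange_big /=; apply: eq_bigr => h _.
rewrite -big_distrr /=; congr (_ * _).
by rewrite [RHS](reindex_inj (mulgI h^-1%g)).
Qed.

HB.instance Definition _ :=
  GRing.isZmodMorphism.Build _ _ (@aug R gT) aug_is_zmod_morphism.
HB.instance Definition _ :=
  GRing.isMonoidMorphism.Build _ _ (@aug R gT) aug_is_monoid_morphism.

Definition gringC t : gring R gT := [ffun g => if g == 1%g then t else 0].

Lemma gringC_is_zmod_morphism : zmod_morphism gringC.
Proof. by move=> s t; apply/ffunP => g; rewrite !ffunE; case: ifP; rewrite ?subrr. Qed.

HB.instance Definition _ :=
  GRing.isZmodMorphism.Build _ _ gringC gringC_is_zmod_morphism.

Lemma aug_gringC t : aug (gringC t) = t.
Proof.
rewrite /aug (bigD1 1%g) //= big1 => [|g /negbTE g1]; last by rewrite ffunE g1.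
by rewrite ffunE eqxx addr0.
Qed.

Lemma subr_aug_gringC a : a - gringC (aug a) \in aug_ideal R gT.
Proof. by rewrite inE raddfB /= aug_gringC subrr. Qed.

Lemma mulrn_aug_ideal a k :
  aug a *+ k = 0 -> exists2 z, z \in aug_ideal R gT & a *+ k = z *+ k.
Proof.
move=> ak0; exists (a - gringC (aug a)); first exact: subr_aug_gringC.
by rewrite mulrnBl -raddfMn ak0 raddf0 subr0.
Qed.

Lemma card_aug_ideal : #|aug_ideal R gT| = (#|R| ^ (#|gT| - 1))%N.
Proof.
pose F (zt : gring R gT * R) := zt.1 + gringC zt.2.
have F_inj : {in setX (aug_ideal R gT) [set: R] &, injective F}.
  move=> [z t] [z' t']; rewrite !inE /F /= => /andP[/eqP az _] /andP[/eqP az' _] eqF.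
  have eq_t : t = t'.
    by have := congr1 (@aug R gT) eqF; rewrite !raddfD /= !aug_gringC az az' !add0r.
  by move: eqF; rewrite eq_t => /addIr ->.
have F_onto : F @: setX (aug_ideal R gT) [set: R] = [set: gring R gT].
  apply/setP => a; rewrite inE; apply/imsetP; exists (a - gringC (aug a), aug a).
    by rewrite inE /= subr_aug_gringC inE.
  by rewrite /F /= subrK.
have := card_in_imset F_inj; rewrite F_onto cardsX !cardsT card_ffun.
have G_gt0 : (0 < #|gT|)%N by apply/card_gt0P; exists 1%g.
have R_gt0 : (0 < #|R|)%N by apply/card_gt0P; exists 0.
rewrite -{1}(prednK G_gt0) expnSr subn1 => /eqP.
by rewrite eqn_pmul2r // => /eqP.
Qed.

Lemma Vunits_group_set : group_set (Vunits R gT).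
Proof.
apply/group_setP; split; first by rewrite inE rmorph1.
by move=> u v; rewrite !inE FinRing.val_unitM rmorphM /= => /eqP-> /eqP->; rewrite mulr1.
Qed.
Canonical Vunits_group := Group Vunits_group_set.

End GroupRing.

Definition gring_map (R S : finNzRingType) (gT : finGroupType) (f : R -> S)
    (a : gring R gT) : gring S gT :=
  [ffun g => f (a g)].

Lemma gring_mapK (R S : finNzRingType) (gT : finGroupType) (f : R -> S) (h : S -> R) :
  cancel h f -> cancel (@gring_map S R gT h) (gring_map f).
Proof. by move=> hK a; apply/ffunP => g; rewrite !ffunE hK. Qed.

Lemma gring_map_eq0 (R S : finNzRingType) (gT : finGroupType) (f : R -> S) m
    (a : gring R gT) :
  (forall x, f x = 0 -> exists y, x = y *+ m) ->
  gring_map f a = 0 -> exists b, a = b *+ m.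
Proof.
move=> ker_f /ffunP fa0.
have ker_a g : exists y, a g = y *+ m by apply: ker_f; have := fa0 g; rewrite !ffunE.
have [b Eb] := fin_all_exists ker_a.
by exists [ffun g => b g]; apply/ffunP => g; rewrite ffunMnE ffunE.
Qed.

Section GringMap.
Variables (R S : finNzRingType) (gT : finGroupType).
Implicit Types (a : gring R gT) (t : R).
Variable f : {rmorphism R -> S}.

Lemma gring_map_is_zmod_morphism : zmod_morphism (@gring_map R S gT f).
Proof. by move=> a b; apply/ffunP => g; rewrite !ffunE rmorphB. Qed.

Lemma gring_map_is_monoid_morphism : monoid_morphism (@gring_map R S gT f).
Proof.
split; first by apply/ffunP => g; rewrite !ffunE; case: eqP; rewrite ?rmorph1 ?rmorph0.
move=> a b; apply/ffunP => g; rewrite !ffunE rmorph_sum; apply: eq_bigr => h _.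
by rewrite rmorphM !ffunE.
Qed.

HB.instance Definition _ :=
  GRing.isZmodMorphism.Build _ _ (@gring_map R S gT f) gring_map_is_zmod_morphism.
HB.instance Definition _ :=
  GRing.isMonoidMorphism.Build _ _ (@gring_map R S gT f) gring_map_is_monoid_morphism.

Lemma aug_gring_map a : aug (gring_map f a) = f (aug a).
Proof. by rewrite /aug rmorph_sum; apply: eq_bigr => g _; rewrite ffunE. Qed.

Lemma gring_mapC t : gring_map f (gringC gT t) = gringC gT (f t).
Proof. by apply/ffunP => g; rewrite !ffunE; case: ifP; rewrite ?rmorph0. Qed.

End GringMap.

Lemma Zp_mulrn_dvd (n k : nat) (x : 'Z_n) : (1 < n)%N -> (n %| k)%N -> x *+ k = 0.
Proof.
move=> n_gt1 /dvdnP[q ->].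
by rewrite mulnC mulrnA -[x *+ n]mulr_natr pchar_Zp // mulr0 mul0rn.
Qed.

Lemma gring_Zp_mulrn_dvd (n k : nat) (gT : finGroupType) (a : gring 'Z_n gT) :
  (1 < n)%N -> (n %| k)%N -> a *+ k = 0.
Proof. by move=> n_gt1 n_dvd_k; apply/ffunP => g; rewrite ffunMnE ffunE Zp_mulrn_dvd. Qed.

Definition Zp_lift (m n : nat) (y : 'Z_m) : 'Z_n := (y : nat)%:R.
Arguments Zp_lift : clear implicits.

(* The proofs are arguments of [Zp_proj] only so that its ring morphism
   structure can be a global canonical instance. *)
Definition Zp_proj (n m : nat) of (1 < m)%N & (0 < n)%N & (m %| n)%N :
  'Z_n -> 'Z_m := Zp_lift n m.

Section ZpProj.
Variables (n m : nat).
Hypotheses (m_gt1 : (1 < m)%N) (n_gt0 : (0 < n)%N) (m_dvd_n : (m %| n)%N).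
Local Notation proj := (Zp_proj m_gt1 n_gt0 m_dvd_n).

Let n_gt1 : (1 < n)%N := leq_trans m_gt1 (dvdn_leq n_gt0 m_dvd_n).

Lemma Zp_proj_nat k : proj k%:R = k%:R.
Proof.
rewrite /Zp_proj /Zp_lift val_Zp_nat // -(Zp_nat_mod m_gt1 (k %% n)).
by rewrite modn_dvdm // Zp_nat_mod.
Qed.

Lemma Zp_projD x y : proj (x + y) = proj x + proj y.
Proof. by rewrite -[x]natr_Zp -[y]natr_Zp -natrD !Zp_proj_nat natrD. Qed.

Lemma Zp_proj_is_zmod_morphism : zmod_morphism proj.
Proof. by move=> x y; apply/eqP; rewrite eq_sym subr_eq -Zp_projD subrK. Qed.

Lemma Zp_proj_is_monoid_morphism : monoid_morphism proj.
Proof.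
split; first exact: (Zp_proj_nat 1).
by move=> x y; rewrite -[x]natr_Zp -[y]natr_Zp -natrM !Zp_proj_nat natrM.
Qed.

HB.instance Definition _ :=
  GRing.isZmodMorphism.Build _ _ proj Zp_proj_is_zmod_morphism.
HB.instance Definition _ :=
  GRing.isMonoidMorphism.Build _ _ proj Zp_proj_is_monoid_morphism.

Lemma Zp_liftK : cancel (Zp_lift m n) proj.
Proof. by move=> y; rewrite [Zp_lift m n y]/Zp_lift Zp_proj_nat natr_Zp. Qed.

Lemma Zp_proj_eq0 x : proj x = 0 -> exists y, x = y *+ m.
Proof.
move=> /eqP; rewrite /Zp_proj /Zp_lift -(Zp_nat_mod m_gt1) -val_eqE /=.
rewrite val_Zp_nat // modn_mod => m_dvd_x.
by exists (x %/ m)%:R; rewrite -mulrnA divnK // natr_Zp.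
Qed.

Section Cofactor.
Variable k : nat.
Hypothesis n_eq : n = (m * k)%N.

Lemma Zp_lift_projMn x : Zp_lift m n (proj x) *+ k = x *+ k.
Proof.
apply/eqP; rewrite -subr_eq0 -mulrnBl.
have [y ->] : exists y, Zp_lift m n (proj x) - x = y *+ m.
  by apply: Zp_proj_eq0; rewrite rmorphB /= Zp_liftK subrr.
by rewrite -mulrnA -n_eq Zp_mulrn_dvd.
Qed.

Lemma Zp_lift_mulrnI y y' :
  Zp_lift m n y *+ k = Zp_lift m n y' *+ k -> y = y'.
Proof.
have k_gt0 : (0 < k)%N by move: n_gt0; rewrite n_eq muln_gt0 => /andP[].
have lt_n (z : 'Z_m) : (z * k < n)%N.
  by rewrite n_eq ltn_pmul2r // -[m in (_ < m)%N](Zp_cast m_gt1) ltn_ord.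
rewrite /Zp_lift -!mulrnA => /(congr1 val); rewrite /= !val_Zp_nat //.
by rewrite !modn_small // => /eqP; rewrite eqn_pmul2r // => /eqP /val_inj.
Qed.

End Cofactor.
End ZpProj.

Section Reduction.
Variables (p e : nat) (gT : finGroupType).
Hypotheses (p_pr : prime p) (e_ge2 : (2 <= e)%N).

Local Notation n := (p ^ e)%N.
Local Notation c := (p ^ e.-1)%N.

Let p_gt1 : (1 < p)%N := prime_gt1 p_pr.
Let n_gt0 : (0 < n)%N. Proof. by rewrite expn_gt0 prime_gt0. Qed.
Let n_eq : n = (p * c)%N.
Proof. by rewrite -expnS prednK // ltnW. Qed.
Let c_gt1 : (1 < c)%N.
Proof. by rewrite -(expn0 p) ltn_exp2l // -ltnS prednK // ltnW. Qed.
Let c_dvd_n : (c %| n)%N. Proof. by rewrite n_eq dvdn_mull. Qed.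
Let n_gt1 : (1 < n)%N := leq_trans c_gt1 (dvdn_leq n_gt0 c_dvd_n).
Let p_dvd_n : (p %| n)%N. Proof. by rewrite n_eq dvdn_mulr. Qed.
Let n_dvd_cc : (n %| c * c)%N.
Proof.
by rewrite n_eq dvdn_pmul2r ?expn_gt0 ?prime_gt0 // dvdn_exp // -ltnS prednK // ltnW.
Qed.

Local Notation proj_c := (Zp_proj c_gt1 n_gt0 c_dvd_n).
Local Notation proj_p := (Zp_proj p_gt1 n_gt0 p_dvd_n).
Local Notation red := (@gring_map _ _ gT proj_c).

Lemma red_gringE a : @red_gring p e gT a = red a.
Proof. by []. Qed.

Lemma red_mulrn_c a : red (a *+ c) = 0.
Proof. by rewrite raddfMn gring_Zp_mulrn_dvd. Qed.

Lemma red_eq0 a : red a = 0 -> exists b, a = b *+ c.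
Proof. exact/gring_map_eq0/Zp_proj_eq0. Qed.

Lemma mulrn_c_sqr0 (a b : gring 'Z_n gT) : (a *+ c) * (b *+ c) = 0.
Proof.
by rewrite mulrnAl mulrnAr -mulrnA gring_Zp_mulrn_dvd.
Qed.

Lemma red_unit_lift a : red a \is a GRing.unit -> a \is a GRing.unit.
Proof.
apply: (unit_lift_sqr0 (gring_mapK (Zp_liftK c_gt1 n_gt0 c_dvd_n))).
by move=> y /red_eq0[b ->]; exact: mulrn_c_sqr0.
Qed.

Definition red_unit (u : {unit gring 'Z_n gT}) : {unit gring 'Z_c gT} :=
  FinRing.Unit (rmorph_unit red (valP u)).

Lemma red_unitM : {in setT &, {morph red_unit : u v / (u * v)%g}}.
Proof. by move=> u v _ _; apply: val_inj; rewrite /= rmorphM. Qed.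
Canonical red_unit_morphism := Morphism red_unitM.

Lemma ker_red_eq : ker_red p e gT = one_plus_pomega p e gT.
Proof.
apply/setP => u; rewrite !inE; apply/andP/existsP => [[/eqP aug_u]|].
  rewrite red_gringE => /eqP red_u.
  have [w Ew] : exists w, val u - 1 = w *+ c.
    by apply: red_eq0; rewrite rmorphB rmorph1 /= red_u subrr.
  have [z z_aug Ez] : exists2 z, z \in aug_ideal 'Z_n gT & w *+ c = z *+ c.
    by apply: mulrn_aug_ideal; rewrite -raddfMn -Ew raddfB /= aug_u rmorph1 subrr.
  by exists z; rewrite z_aug -Ez -Ew addrC subrK /=.
case=> z /andP[z_aug /eqP ->]; rewrite inE in z_aug; split.
  by rewrite rmorphD rmorph1 raddfMn /= (eqP z_aug) mul0rn addr0.
by rewrite red_gringE rmorphD rmorph1 /= red_mulrn_c addr0.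
Qed.

Lemma ker_red_unit : ('ker_(Vunits 'Z_n gT) red_unit)%g = ker_red p e gT.
Proof. by apply/setP => u; rewrite !inE. Qed.

Lemma im_red_unit : (red_unit @* Vunits 'Z_n gT)%g = Vunits 'Z_c gT.
Proof.
rewrite morphimEsub ?subsetT //; apply/setP => v; apply/imsetP/idP => [[u]|].
  by rewrite !inE => /eqP aug_u ->; rewrite /= aug_gring_map aug_u rmorph1.
rewrite inE => /eqP aug_v.
pose a := gring_map (Zp_lift c n) (val v); pose t := aug a - 1.
have red_a : red a = val v by apply: (gring_mapK (Zp_liftK c_gt1 n_gt0 c_dvd_n)).
have t_c : proj_c t = 0 by rewrite rmorphB /= -aug_gring_map red_a aug_v rmorph1 subrr.
have red_at : red (a - gringC gT t) = val v.
  by rewrite rmorphB /= gring_mapC /= t_c raddf0 subr0.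
have unit_at : a - gringC gT t \is a GRing.unit.
  by apply: red_unit_lift; rewrite red_at (valP v).
exists (FinRing.Unit unit_at); last exact: val_inj.
by rewrite inE /= raddfB /= aug_gringC subKr.
Qed.

Lemma one_plus_mulrn_cM (a b : gring 'Z_n gT) :
  (1 + a *+ c) * (1 + b *+ c) = 1 + (a + b) *+ c.
Proof.
rewrite mulrDl mul1r mulrDr mulr1 mulrn_c_sqr0 addr0 mulrnDl.
by rewrite addrAC addrA.
Qed.

Lemma one_plus_mulrn_cX (a : gring 'Z_n gT) k : (1 + a *+ c) ^+ k = 1 + a *+ k *+ c.
Proof.
elim: k => [|k IHk]; first by rewrite expr0 mulr0n mul0rn addr0.
by rewrite exprS IHk one_plus_mulrn_cM mulrS.
Qed.

Lemma ker_red_unitP u :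
  u \in ('ker_(Vunits 'Z_n gT) red_unit)%g -> exists a, val u = 1 + a *+ c.
Proof.
by rewrite ker_red_unit ker_red_eq inE => /existsP[z /andP[_ /eqP ->]]; exists z.
Qed.

Lemma one_plus_pomega_abelem : (p.-abelem (one_plus_pomega p e gT))%g.
Proof.
rewrite -ker_red_eq -ker_red_unit; apply/abelemP => //; split.
  apply/centsP => u /ker_red_unitP[a Eu] v /ker_red_unitP[b Ev]; apply: val_inj.
  by rewrite !FinRing.val_unitM Eu Ev !one_plus_mulrn_cM [a + b]addrC.
move=> u /ker_red_unitP[a Eu].
apply: val_inj; rewrite FinRing.val_unitX Eu one_plus_mulrn_cX -mulrnA -n_eq.
by rewrite gring_Zp_mulrn_dvd ?addr0.
Qed.

Definition one_plus_c (k : gring 'Z_p gT) : {unit gring 'Z_n gT} :=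
  insubd (1%g : {unit gring 'Z_n gT}) (1 + gring_map (Zp_lift p n) k *+ c).

Lemma val_one_plus_c k : val (one_plus_c k) = 1 + gring_map (Zp_lift p n) k *+ c.
Proof. by rewrite insubdK // unitr_1Dsqr0 // mulrn_c_sqr0. Qed.

Lemma one_plus_c_inj : injective one_plus_c.
Proof.
move=> k k' /(congr1 val); rewrite !val_one_plus_c => /addrI /ffunP eq_kk'.
apply/ffunP => g; have := eq_kk' g; rewrite !ffunMnE !ffunE.
exact: (Zp_lift_mulrnI p_gt1 n_gt0 p_dvd_n n_eq).
Qed.

Lemma one_plus_pomega_param :
  one_plus_pomega p e gT = one_plus_c @: aug_ideal 'Z_p gT.
Proof.
apply/setP => u; apply/idP/imsetP => [|[k k_aug ->]].
  rewrite inE => /existsP[z /andP[z_aug /eqP Eu]].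
  exists (gring_map proj_p z).
    by move: z_aug; rewrite !inE aug_gring_map => /eqP->; rewrite rmorph0.
  apply: val_inj; rewrite val_one_plus_c Eu; congr (1 + _).
  by apply/ffunP => g; rewrite !ffunMnE !ffunE (Zp_lift_projMn p_gt1 n_gt0 p_dvd_n n_eq).
have aug_k : aug (gring_map (Zp_lift p n) k) *+ c = 0.
  rewrite -(Zp_lift_projMn p_gt1 n_gt0 p_dvd_n n_eq) -aug_gring_map.
  rewrite (gring_mapK (Zp_liftK p_gt1 n_gt0 p_dvd_n)).
  by rewrite inE in k_aug; rewrite (eqP k_aug) /Zp_lift /= mulr0n mul0rn.
have [z z_aug Ez] := mulrn_aug_ideal aug_k.
by rewrite inE; apply/existsP; exists z; rewrite z_aug val_one_plus_c Ez eqxx.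
Qed.

End Reduction.

Local Close Scope ring_scope.
Local Open Scope group_scope.

Theorem lemma6 (p e : nat) (gT : finGroupType) :
  prime p -> (2 <= e)%N -> abelian [set: gT] -> p.-group [set: gT] ->
  [/\ ker_red p e gT = one_plus_pomega p e gT,
      p.-abelem (one_plus_pomega p e gT),
      #|one_plus_pomega p e gT| = (p ^ (#|gT| - 1))%N
    & Vunits 'Z_(p ^ e) gT / one_plus_pomega p e gT
        \isog Vunits 'Z_(p ^ e.-1) gT].
Proof.
move=> p_pr e_ge2 _ _; split.
- exact: ker_red_eq.
- exact: one_plus_pomega_abelem.
- rewrite (one_plus_pomega_param gT p_pr e_ge2) card_in_imset.
    by rewrite card_aug_ideal card_ord (Zp_cast (prime_gt1 p_pr)).
  move=> k k' _ _; exact: one_plus_c_inj.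
- rewrite -(ker_red_eq gT p_pr e_ge2) -(ker_red_unit gT p_pr e_ge2).
  rewrite -(im_red_unit gT p_pr e_ge2).
  exact: first_isog_loc (subsetT _).
Qed.
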